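(* Let $(Y_t,X_t)_{t\ge1}$ be a hidden Markov model with finite state space $S$, $T\ge1$, and $x^T\in\mathcal X^T$ with $p(x^T)>0$. For each $k\in\{1,\dots,T\}$ let $v(x^T;k)$ be any minimizer over $s^T\in S^T$ of $\bar R_k(s^T|x^T)$. Then: (i) for every $k\in\{1,\dots,T\}$ and every $s^T\in S^T$, $\bar R_k(s^T|x^T)=(k-1)\bar R_\infty(s^T|x^T)+\bar R_1(s^T|x^T)$; (ii) for every $k\in\{2,\dots,T\}$, $v(x^T;k)$ is admissible, i.e. $p(v(x^T;k)|x^T)>0$; (iii) for every $k\in\{2,\dots,T\}$, $\bar R_\infty(v(x^T;k)|x^T)\le\bar R_\infty(v(x^T;k-1)|x^T)$; (iv) for every $k\in\{2,\dots,T\}$, $\bar R_1(v(x^T;k)|x^T)\ge\bar R_1(v(x^T;k-1)|x^T)$.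
   Context: Hidden Markov model: $Y$ is a Markov chain on finite $S$; given $Y$, the $X_t$ are conditionally independent and $X_t$ has density $f_s$ when $Y_t=s$. Posterior path law $p(s^T|x^T)=\mathbf P(Y^T=s^T|X^T=x^T)$; for $1\le a\le b\le T$, $p(s_a^b|x^T)=\mathbf P(Y_a^b=s_a^b|X^T=x^T)$ with $s_a^b=(s_a,\dots,s_b)$. For a positive integer $k$: $\bar R_k(s^T|x^T)=-\frac1T\ln\prod_{j=1-k}^{T-1}p(s_{(j+1)\vee1}^{(j+k)\wedge T}|x^T)$ (so $\bar R_1(s^T|x^T)=-\frac1T\sum_{t=1}^T\ln\mathbf P(Y_t=s_t|X^T=x^T)$), and $\bar R_\infty(s^T|x^T)=-\frac1T\ln p(s^T|x^T)$. Here $\vee=\max$, $\wedge=\min$, $\ln0=-\infty$. *)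

From HB Require Import structures.
From mathcomp Require Import all_boot all_order all_algebra.
From mathcomp Require Import all_classical all_reals all_analysis.
Set Implicit Arguments. Unset Strict Implicit. Unset Printing Implicit Defensive.
Import Order.TTheory GRing.Theory Num.Theory.
Local Open Scope ring_scope.

(* Hidden Markov model observed up to time T = n.+1 (so T >= 1).
   Times are 0-based: t : 'I_T stands for time t+1 of the paper.
   pi0 = initial law of Y_1, P = transition matrix of Y,
   f s y = emission density f_s evaluated at y, x = observed x^T. *)
Section HMM.
Variables (R : realType) (S : finType) (X : Type) (n : nat).
Variables (pi0 : S -> R) (P : S -> S -> R) (f : S -> X -> R) (x : 'I_n.+1 -> X).

Definition hmm_path := {ffun 'I_n.+1 -> S}.

Definition hmm_weight (s : hmm_path) : R :=
  pi0 (s ord0) * f (s ord0) (x ord0) *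
  \prod_(t < n) (P (s (widen_ord (leqnSn n) t)) (s (lift ord0 t))
                 * f (s (lift ord0 t)) (x (lift ord0 t))).

Definition hmm_px : R := \sum_(s : hmm_path) hmm_weight s.

Definition hmm_post (s : hmm_path) : R := hmm_weight s / hmm_px.

Definition hmm_post_block (a b : nat) (s : hmm_path) : R :=
  \sum_(s' : hmm_path | [forall t : 'I_n.+1, ((a <= t <= b)%N) ==> (s' t == s t)])
     hmm_post s'.

Definition eln (r : R) : \bar R := if r == 0 then (-oo)%E else (ln r)%:E.

(* \bar R_k(s^T | x^T).  The paper's index j = 1-k .. T-1 is i = j+k-1 = 0 .. T+k-2,
   and the (1-based) window [(j+1) v 1, (j+k) ^ T] is the 0-based window
   [i - (k-1) (truncated), min(i, T-1)]. *)
Definition Rbar (k : nat) (s : hmm_path) : \bar R :=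
  ((- eln (\prod_(i < n + k) hmm_post_block (i - k.-1)%N (minn i n) s))
     * ((n.+1)%:R^-1)%:E)%E.

Definition Rinf (s : hmm_path) : \bar R :=
  ((- eln (hmm_post s)) * ((n.+1)%:R^-1)%:E)%E.

End HMM.

From HB Require Import structures.
From mathcomp Require Import all_boot all_order all_algebra.
From mathcomp Require Import all_classical all_reals all_analysis.
From mathcomp Require Import zify ring lra.
Import Order.TTheory GRing.Theory Num.Theory.
Local Open Scope ring_scope.
Set Implicit Arguments. Unset Strict Implicit. Unset Printing Implicit Defensive.

(* Given x^T, the hidden path is still a Markov chain, so a block probability
   factors as p(s_a^b) = prod_{a<=t<=b} p(s_t) * prod_{a<=t<b} p(s_t, s_t+1) / (p(s_t) p(s_t+1)).
   In the product defining Rbar_k every time t is covered by exactly k windows and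
   every pair (t, t+1) by k-1 of them, so that product is p(s^T)^(k-1) times the
   product for k = 1; taking logarithms gives (i).  Hence v(x^T;k) minimizes
   Rbar_1 + (k-1) Rbar_oo, which is +oo on inadmissible paths when k >= 2 (ii),
   and adding the minimality inequalities of two consecutive penalties gives
   (iii) and (iv). *)

Lemma prod_nat_indicator_exp (R : comPzSemiRingType) (F : nat -> R) lo hi N :
  (hi <= N)%N -> \prod_(lo <= t < hi) F t = \prod_(t < N) F t ^+ (lo <= t < hi)%N.
Proof.
move=> hiN; rewrite big_geq_mkord (big_ord_widen_cond _ _ _ hiN) big_mkcond /=.
by apply: eq_bigr => t _; rewrite andbC; case: ifP.
Qed.

Lemma sum_nat_indicator a b N : (a <= b)%N ->
  (\sum_(i < N) (a <= i < b))%N = (minn b N - minn a N)%N.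
Proof.
move=> ab; elim: N => [|N IH]; first by rewrite big_ord0; lia.
by rewrite big_ord_recr /= IH; case: (boolP (a <= N < b)%N) => /=; lia.
Qed.

Lemma penalized_minimizers_monotone (R : realDomainType) (c c' au bu aw bw : R) :
  0 <= c < c' -> c * au + bu <= c * aw + bw -> c' * aw + bw <= c' * au + bu ->
  aw <= au /\ bu <= bw.
Proof.
move=> /andP[c0 cc'] hu hw.
have le_a : aw <= au by nra.
by split=> //; nra.
Qed.

Lemma eln_neq_pinfty (R : realType) (r : R) : eln r != +oo%E.
Proof. by rewrite /eln; case: ifP. Qed.

Lemma eln_expMn (R : realType) (p y : R) m : 0 <= p -> 0 <= y ->
  eln (p ^+ m * y) = (m%:R%:E * eln p + eln y)%E.
Proof.
move=> p0 y0; rewrite /eln.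
have [->|ny0] := eqVneq y 0; first by rewrite mulr0 eqxx addeNy.
have [->|np0] := eqVneq p 0.
  case: m => [|m]; first by rewrite expr0 mul1r (negbTE ny0) mul0e add0e.
  by rewrite expr0n mul0r eqxx gt0_muleNy ?lte_fin ?ltr0n.
rewrite mulf_eq0 expf_eq0 (negbTE np0) (negbTE ny0) andbF /=.
have [p_gt0 y_gt0] : 0 < p /\ 0 < y by rewrite !lt_def np0 ny0.
by rewrite lnM ?posrE ?exprn_gt0 // lnXn // -EFinM mulr_natl.
Qed.

Lemma oppe_nat_affine_mule (R : realType) (m : nat) (c : R) (a b : \bar R) :
  0 < c -> a != +oo%E -> b != +oo%E ->
  (- (m%:R%:E * a + b) * c%:E = m%:R%:E * (- a * c%:E) + - b * c%:E)%E.
Proof.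
move=> c0; have c0' : (0 < c%:E)%E by rewrite lte_fin.
have Noo : (- -oo = +oo :> \bar R)%E by [].
case: a => [a| |] //= _; case: b => [b| |] //= _.
- by change ((- (m%:R * a + b) * c)%:E = (m%:R * (- a * c) + - b * c)%:E); congr EFin; ring.
- by rewrite gt0_mulye // addey // -!EFinM.
- case: m => [|m]; first by rewrite !mul0e !add0e.
  have m0 : (0 < m.+1%:R%:E :> \bar R)%E by rewrite lte_fin ltr0n.
  by rewrite gt0_muleNy // addNye Noo !gt0_mulye // gt0_muley.
- rewrite addeNy Noo !gt0_mulye // addey //.
  case: m => [|m]; first by rewrite mul0e.
  by rewrite gt0_muley // lte_fin ltr0n.
Qed.

Section PosteriorBlocks.
Variables (R : realType) (S : finType) (X : Type) (n : nat).
Variables (pi0 : S -> R) (P : S -> S -> R) (f : S -> X -> R) (x : 'I_n.+1 -> X).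
Hypothesis pi0_ge0 : forall s, 0 <= pi0 s.
Hypothesis P_ge0 : forall s s', 0 <= P s s'.
Hypothesis f_ge0 : forall s y, 0 <= f s y.
Hypothesis px_gt0 : 0 < hmm_px pi0 P f x.

Local Notation path := (hmm_path S n).
Local Notation weight := (hmm_weight pi0 P f x).
Local Notation post := (hmm_post pi0 P f x).
Local Notation block := (hmm_post_block pi0 P f x).

Definition agree (a b : nat) (s s' : path) : bool :=
  [forall t : 'I_n.+1, ((a <= t <= b)%N) ==> (s' t == s t)].

Lemma agreeP a b (s s' : path) :
  reflect (forall t : 'I_n.+1, (a <= t <= b)%N -> s' t = s t) (agree a b s s').
Proof.
by apply: (iffP forallP) => h t; [move=> ht; apply/eqP/(implyP (h t)) | apply/implyP => /h ->].
Qed.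

Lemma post_blockE a b s : block a b s = \sum_(s' | agree a b s s') post s'.
Proof. by []. Qed.

Definition splice (c : nat) (u v : path) : path :=
  [ffun t : 'I_n.+1 => if (t <= c)%N then u t else v t].

Lemma splice_pairK c : involutive (fun p : path * path => (splice c p.1 p.2, splice c p.2 p.1)).
Proof. by move=> [u v] /=; congr (_, _); apply/ffunP => t; rewrite !ffunE; case: leqP. Qed.

(* The weight is a product of factors each involving two consecutive times,
   so exchanging the tails of two paths that meet at time c preserves the
   product of their weights. *)
Lemma weight_splice c (u v : path) :
  (forall t : 'I_n.+1, nat_of_ord t = c -> u t = v t) ->
  weight u * weight v = weight (splice c u v) * weight (splice c v u).
Proof.
move=> uv; rewrite /hmm_weight /splice !ffunE /=.
rewrite [LHS]mulrACA [RHS]mulrACA -!big_split /=; congr (_ * _).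
apply: eq_bigr => t _; rewrite !ffunE /= ?lift0.
have [ltc|lect] := leqP t.+1 c; first by rewrite (ltnW ltc).
have [tc|ltct] := leqP t c; last by rewrite mulrC.
have eq_tc : nat_of_ord (widen_ord (leqnSn n) t) = c by rewrite /=; lia.
by rewrite (uv _ eq_tc) mulrC.
Qed.

Lemma post_ge0 s : 0 <= post s.
Proof.
rewrite /hmm_post divr_ge0 ?(ltW px_gt0) // /hmm_weight.
by rewrite !mulr_ge0 // prodr_ge0 // => t _; rewrite mulr_ge0.
Qed.

Lemma post_block_ge0 a b s : 0 <= block a b s.
Proof. by rewrite sumr_ge0 // => s' _; apply: post_ge0. Qed.

Lemma post_block_full s : block 0 n s = post s.
Proof.
rewrite post_blockE (big_pred1 s) // => s' /=.
apply/agreeP/eqP => [h|-> //]; apply/ffunP => t; apply: h.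
by have := ltn_ord t; lia.
Qed.

Lemma post_block_le a b a' b' s : (a <= a')%N -> (b' <= b)%N ->
  block a b s <= block a' b' s.
Proof.
move=> aa' b'b; rewrite !post_blockE [leRHS]big_mkcond [leLHS]big_mkcond /=.
apply: ler_sum => s' _; case: (agreeP a b) => [h|_]; case: (agreeP a' b') => //.
- by case=> t ht; apply: h; lia.
- by rewrite post_ge0.
Qed.

Lemma agree_splice a c b s u v : (a <= c <= b)%N ->
  agree a b s u && agree c c s v = agree a c s (splice c u v) && agree c b s (splice c v u).
Proof.
move=> acb; apply/andP/andP => [[/agreeP hu /agreeP hv]|[/agreeP hu /agreeP hv]].
  split; apply/agreeP => t ht; rewrite ffunE.
    by rewrite (_ : (t <= c)%N) ?hu //; lia.
  by case: ifP => tc; [apply: hv | apply: hu]; lia.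
split; apply/agreeP => t ht.
  have [tc|ct] := leqP t c.
    by have := hu t; rewrite ffunE tc; apply; lia.
  by have := hv t; rewrite ffunE (leqNgt t c) ct; apply; lia.
by have := hv t; rewrite ffunE (_ : (t <= c)%N); [apply|]; lia.
Qed.

Lemma post_block_markov a c b s : (a <= c <= b)%N -> (c <= n)%N ->
  block a b s * block c c s = block a c s * block c b s.
Proof.
move=> acb cn; rewrite !post_blockE !big_distrlr /= !pair_big /=.
rewrite [RHS](reindex_inj (inv_inj (splice_pairK c))) /=.
apply: eq_big => [[u v]|[u v] /andP[/agreeP hu /agreeP hv]] /=; first exact: agree_splice.
rewrite /hmm_post mulrACA [RHS]mulrACA (@weight_splice c) // => t tc.
by rewrite hu ?hv //; lia.
Qed.

Definition marginal (s : path) t := block t t s.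
Definition pair_ratio (s : path) t := block t t.+1 s / (marginal s t * marginal s t.+1).

Definition window_prod k s := \prod_(i < n + k) block (i - k.-1) (minn i n) s.

Section PositiveMarginals.
Variable s : path.
Hypothesis marginal_gt0 : forall t, (t <= n)%N -> 0 < marginal s t.

Lemma post_block_chain a b : (a <= b <= n)%N ->
  block a b s = \prod_(a <= t < b.+1) marginal s t * \prod_(a <= t < b) pair_ratio s t.
Proof.
move=> /andP[]; elim: b => [|b IH] ab bn.
  by rewrite (_ : a = 0%N) ?big_nat1 ?big_geq ?mulr1 //; lia.
have [->|neq] := eqVneq a b.+1; first by rewrite big_nat1 big_geq ?mulr1.
have mb_neq0 : marginal s b != 0 by rewrite gt_eqF // marginal_gt0 //; lia.
have mb1_neq0 : marginal s b.+1 != 0 by rewrite gt_eqF // marginal_gt0.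
apply: (mulIf mb_neq0); rewrite {1}/marginal post_block_markov; try lia.
rewrite IH; try lia.
rewrite [\prod_(a <= t < b.+2) _]big_nat_recr ?[\prod_(a <= t < b.+1) pair_ratio s t]big_nat_recr /=;
  try lia.
by rewrite /pair_ratio; field; rewrite mb_neq0 mb1_neq0.
Qed.

(* Time t lies in exactly k of the windows, the pair (t, t+1) in k-1 of them. *)
Lemma window_prod_factor k : (1 <= k <= n.+1)%N ->
  window_prod k s = (\prod_(t < n.+1) marginal s t) ^+ k * (\prod_(t < n) pair_ratio s t) ^+ k.-1.
Proof.
move=> /andP[k1 kn].
transitivity (\prod_(i < n + k)
   (\prod_(t < n.+1) marginal s t ^+ (i - k.-1 <= t < (minn i n).+1)%N
    * \prod_(t < n) pair_ratio s t ^+ (i - k.-1 <= t < minn i n)%N)).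
  apply: eq_bigr => i _; have := ltn_ord i => ink.
  rewrite post_block_chain; last lia.
  by rewrite (@prod_nat_indicator_exp _ _ _ _ n.+1) ?(@prod_nat_indicator_exp _ _ _ _ n) //; lia.
rewrite big_split /= -!prodrXl [X in X * _]exchange_big [X in _ * X]exchange_big /=.
congr (_ * _); apply: eq_bigr => t _; rewrite prodrXr; congr (_ ^+ _); have := ltn_ord t => tn.
  rewrite (eq_bigr (fun i : 'I_(n + k) => nat_of_bool (t <= i < t + k)%N)).
    by rewrite sum_nat_indicator; lia.
  by move=> i _; congr nat_of_bool; apply/idP/idP; lia.
rewrite (eq_bigr (fun i : 'I_(n + k) => nat_of_bool (t.+1 <= i < t + k)%N)).
  by rewrite sum_nat_indicator; lia.
by move=> i _; congr nat_of_bool; apply/idP/idP; lia.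
Qed.

End PositiveMarginals.

Lemma window_prod_marginal0 s k t : (1 <= k)%N -> (t <= n)%N -> marginal s t = 0 ->
  window_prod k s = 0.
Proof.
move=> k1 tn mt0; have tnk : (t < n + k)%N by lia.
rewrite /window_prod (bigD1 (Ordinal tnk)) //= (_ : block _ _ s = 0) ?mul0r //.
apply/eqP; rewrite eq_le post_block_ge0 andbT -mt0 post_block_le //; lia.
Qed.

Lemma window_prodE s k : (1 <= k <= n.+1)%N ->
  window_prod k s = post s ^+ k.-1 * window_prod 1 s.
Proof.
move=> /andP[k1 kn].
have [/forallP mpos | /forallPn [t]] := boolP [forall t : 'I_n.+1, 0 < marginal s t].
  have marginal_gt0 t : (t <= n)%N -> 0 < marginal s t.
    by move=> tn; apply: (mpos (Ordinal (tn : (t < n.+1)%N))).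
  rewrite !window_prod_factor ?k1 // -post_block_full post_block_chain //= -!(big_mkord xpredT).
  by rewrite expr1 expr0 mulr1 exprMn -(prednK k1) exprS /= [RHS]mulrC mulrA.
move=> mt_ngt0; have mt0 : marginal s t = 0.
  by apply/eqP; rewrite eq_le post_block_ge0 andbT leNgt.
have tn : (t <= n)%N by have := ltn_ord t; lia.
by rewrite !(window_prod_marginal0 _ tn mt0) ?mulr0.
Qed.

Lemma window_prod_ge0 k s : 0 <= window_prod k s.
Proof. by rewrite prodr_ge0 // => i _; apply: post_block_ge0. Qed.

Lemma window_prod_gt0 k s : 0 < post s -> 0 < window_prod k s.
Proof.
move=> ps; rewrite prodr_gt0 // => i _; rewrite (lt_le_trans ps) //.
by rewrite -post_block_full post_block_le //; lia.
Qed.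

Local Notation Rbar := (Rbar pi0 P f x).
Local Notation Rinf := (Rinf pi0 P f x).

Definition Rinf_real s := - ln (post s) * (n.+1)%:R^-1.
Definition Rbar1_real s := - ln (window_prod 1 s) * (n.+1)%:R^-1.

Lemma Rbar_decomposition k s : (1 <= k <= n.+1)%N ->
  Rbar k s = (k.-1%:R%:E * Rinf s + Rbar 1 s)%E.
Proof.
move=> kn; rewrite /Rbar -/(window_prod k s) -/(window_prod 1 s) window_prodE //.
by rewrite eln_expMn ?post_ge0 ?window_prod_ge0 // oppe_nat_affine_mule ?eln_neq_pinfty
  ?invr_gt0 ?ltr0n.
Qed.

Lemma Rinf_admissible s : 0 < post s -> Rinf s = (Rinf_real s)%:E.
Proof. by move=> ps; rewrite /Rinf /eln gt_eqF. Qed.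

Lemma Rbar1_admissible s : 0 < post s -> Rbar 1 s = (Rbar1_real s)%:E.
Proof. by move=> ps; rewrite /Rbar -/(window_prod 1 s) /eln gt_eqF // window_prod_gt0. Qed.

Lemma Rbar_admissible k s : 0 < post s -> (1 <= k <= n.+1)%N ->
  Rbar k s = (k.-1%:R * Rinf_real s + Rbar1_real s)%:E.
Proof. by move=> ps kn; rewrite Rbar_decomposition // Rinf_admissible // Rbar1_admissible. Qed.

Lemma Rinf_inadmissible s : post s = 0 -> Rinf s = +oo%E.
Proof. by move=> ps0; rewrite /Rinf /eln ps0 eqxx gt0_mulye // lte_fin invr_gt0 ltr0n. Qed.

Lemma Rbar_inadmissible k s : post s = 0 -> (2 <= k <= n.+1)%N -> Rbar k s = +oo%E.
Proof.
move=> ps0 kn; rewrite /Rbar -/(window_prod k s) window_prodE; last lia.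
rewrite ps0 expr0n (_ : (k.-1 == 0)%N = false); last by apply/negbTE; lia.
by rewrite mul0r /eln eqxx gt0_mulye // lte_fin invr_gt0 ltr0n.
Qed.

Lemma exists_admissible : exists s, 0 < post s.
Proof.
have [/existsP [s ws_gt0] | /existsPn ws_le0] := boolP [exists s, 0 < weight s].
  by exists s; rewrite /hmm_post divr_gt0.
suff : hmm_px pi0 P f x <= 0 by rewrite leNgt px_gt0.
by rewrite sumr_le0 // => s _; rewrite leNgt ws_le0.
Qed.

Lemma minimizer_admissible k u : (2 <= k <= n.+1)%N ->
  (forall s, (Rbar k u <= Rbar k s)%E) -> 0 < post u.
Proof.
move=> kn umin; rewrite lt_def post_ge0 andbT; apply/eqP => pu0.
have [s ps] := exists_admissible.
have kn' : (1 <= k <= n.+1)%N by lia.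
by have := umin s; rewrite Rbar_inadmissible // Rbar_admissible // leye_eq.
Qed.

(* By [Rbar_admissible], minimizers of [Rbar j.+1] and [Rbar j.+2] minimize
   [Rbar 1 + c Rinf] for c = j and c = j+1 respectively. *)
Lemma minimizers_monotone j u w : (j.+2 <= n.+1)%N ->
  (forall s, (Rbar j.+1 u <= Rbar j.+1 s)%E) -> (forall s, (Rbar j.+2 w <= Rbar j.+2 s)%E) ->
  (Rinf w <= Rinf u)%E /\ (Rbar 1 u <= Rbar 1 w)%E.
Proof.
move=> jn umin wmin; have pw : 0 < post w by apply: minimizer_admissible wmin; lia.
have [pu0|pu] := eqVneq (post u) 0.
  case: j jn umin wmin => [_ umin _|j jn umin _].
    by split; [rewrite (Rinf_inadmissible pu0) leey | exact: umin].
  by have := @minimizer_admissible j.+2 u ltac:(lia) umin; rewrite pu0 ltxx.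
have {}pu : 0 < post u by rewrite lt_def pu post_ge0.
have [ju jw] : (1 <= j.+1 <= n.+1)%N /\ (1 <= j.+2 <= n.+1)%N by lia.
have hu := umin w; have hw := wmin u.
rewrite !Rbar_admissible // !lee_fin in hu hw.
rewrite (Rinf_admissible pw) (Rinf_admissible pu) (Rbar1_admissible pu) (Rbar1_admissible pw).
have c_lt : 0 <= (j%:R : R) < j.+1%:R by rewrite ler0n ltr_nat ltnSn.
by rewrite !lee_fin; apply: penalized_minimizers_monotone c_lt hu hw.
Qed.

End PosteriorBlocks.

Theorem corollary6 (R : realType) (S : finType) (X : Type) (n : nat)
    (pi0 : S -> R) (P : S -> S -> R) (f : S -> X -> R) (x : 'I_n.+1 -> X)
    (v : nat -> hmm_path S n) :
  (forall s, 0 <= pi0 s) -> \sum_(s : S) pi0 s = 1 ->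
  (forall s s', 0 <= P s s') -> (forall s, \sum_(s' : S) P s s' = 1) ->
  (forall s y, 0 <= f s y) ->
  0 < hmm_px pi0 P f x ->
  (forall k, (1 <= k <= n.+1)%N ->
     forall s : hmm_path S n, (Rbar pi0 P f x k (v k) <= Rbar pi0 P f x k s)%E) ->
  [/\ (forall k, (1 <= k <= n.+1)%N -> forall s : hmm_path S n,
         Rbar pi0 P f x k s
         = ((k.-1)%:R%:E * Rinf pi0 P f x s + Rbar pi0 P f x 1 s)%E),
      (forall k, (2 <= k <= n.+1)%N -> 0 < hmm_post pi0 P f x (v k)),
      (forall k, (2 <= k <= n.+1)%N ->
         (Rinf pi0 P f x (v k) <= Rinf pi0 P f x (v k.-1))%E) &
      (forall k, (2 <= k <= n.+1)%N ->
         (Rbar pi0 P f x 1 (v k.-1) <= Rbar pi0 P f x 1 (v k))%E)].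
Proof.
move=> pi0_ge0 _ P_ge0 _ f_ge0 px_gt0 vmin.
have monotone k : (2 <= k <= n.+1)%N ->
    (Rinf pi0 P f x (v k) <= Rinf pi0 P f x (v k.-1))%E /\
    (Rbar pi0 P f x 1 (v k.-1) <= Rbar pi0 P f x 1 (v k))%E.
  case: k => [|[|j]] // kn.
  by apply: (minimizers_monotone pi0_ge0 P_ge0 f_ge0 px_gt0 (j := j)); try apply: vmin; lia.
split=> [k kn s | k kn | k /monotone[] // | k /monotone[] //].
  exact: (Rbar_decomposition pi0_ge0 P_ge0 f_ge0 px_gt0).
by apply: (minimizer_admissible pi0_ge0 P_ge0 f_ge0 px_gt0 kn); apply: vmin; lia.
Qed.
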